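(* Let $F$ be an $h$-flipclass of $\mathfrak S_n$, let $E=E(F)$ and $m=|E|$. Then: (1) the set $F'=\{r_E(\Gamma):\Gamma\in F\}$ is an $h$-flipclass of $\mathfrak S_m$, and $r_E$ is a flips-preserving bijection from $F$ to $F'$ satisfying $r_E(l_i(\Gamma))=l_i(r_E(\Gamma))$ for all $\Gamma\in F$ and $i\in[h]$, where $l_i(\Delta)$ is the $i$-th label of a path $\Delta$; (2) $r_E$ induces an isomorphism of edge-labelled directed graphs from $S_F$ to $S_{F'}$ and from $TS_F$ to $TS_{F'}$, with labels also matched by $r_E$; (3) for any reflection ordering $\preceq$ of the transpositions of $\mathfrak S_n$, the increasing paths (w.r.t. $\preceq$) of $F$, $S_F$, $TS_F$ correspond under $r_E$ to the increasing paths (w.r.t. $\preceq_{r_E}$) of $F'$, $S_{F'}$, $TS_{F'}$, respectively; (4) $r_E$ induces an isomorphism from $F$ to $F'$.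
   Context: $\mathfrak S_n$ is the symmetric group on $[n]$, $T$ its transpositions, $\ell$ the length w.r.t. simple transpositions. The Bruhat graph $B(\mathfrak S_n)$ has an edge $x\xrightarrow{t}y$ iff $yx^{-1}=t\in T$ and $\ell(x)<\ell(y)$; $P_h(u,v)$ is the set of paths $u=x_0\to\cdots\to x_h=v$ of length $h$. Between two fixed vertices there are $0$ or $2$ paths of length $2$, each the flip of the other; the $i$-th flip operator $f_i$ ($i\in[h-1]$) replaces $x_{i-1}\to x_i\to x_{i+1}$ by its flip; an $h$-flipclass of $\mathfrak S_n$ is an orbit of $\langle f_1,\dots,f_{h-1}\rangle$ on some $P_h(u,v)$. For a path $\Gamma$ with labels $t_1,\dots,t_h$, let $M(\Gamma)=\{a\in[n]:t_i(a)\neq a \text{ for some } i\}$; $E(F)$ is $M(\Gamma)$ for any $\Gamma\in F$ (independent of $\Gamma$). For $E\subseteq[n]$ with $|E|=m$, $r_E:E\to[m]$ is the unique order-preserving bijection; for $w\in\mathfrak S_n$, $r_E(w)\in\mathfrak S_m$ is the permutation whose one-line notation is obtained from that of $w$ by deleting entries not in $E$ and applying $r_E$ to the remaining entries; for a path $\Gamma$ all of whose labels are transpositions $(a,b)$ with $a,b\in E$, $r_E(\Gamma)$ is the path in $B(\mathfrak S_m)$ obtained by applying $r_E$ to its vertices and labels ($r_E((a,b))=(r_E(a),r_E(b))$). For a total order $\preceq$ on transpositions of $\mathfrak S_n$, $\preceq_{r_E}$ is the total order on transpositions of $\mathfrak S_m$ with $(a,b)\preceq_{r_E}(c,d)$ iff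 $(r_E^{-1}(a),r_E^{-1}(b))\preceq(r_E^{-1}(c),r_E^{-1}(d))$. For a flipclass $F$: $S_F$ is the edge-labelled subgraph of $B(\mathfrak S_n)$ of vertices and edges lying on paths of $F$; $TS_F$ has vertices $(a,i)$ such that some path $(x_0,\dots,x_h)\in F$ has $x_i=a$, and edges $(a,i)\xrightarrow{t}(b,i+1)$ whenever some path of $F$ contains $x_i=a\xrightarrow{t}b=x_{i+1}$. A reflection ordering is a total order $\preceq$ on $T$ with, for $a<b<c$, either $(a,b)\preceq(a,c)\preceq(b,c)$ or $(b,c)\preceq(a,c)\preceq(a,b)$; a path with labels $t_1,\dots,t_h$ is increasing if $t_1\preceq\cdots\preceq t_h$. Isomorphism of flipclasses: for an $h$-flipclass $F$ of $\mathfrak S_n$ and $F'$ of $\mathfrak S_m$, a pair $(f,g)$ with $f$ a bijection from the permutations occurring on paths of $F$ onto those of $F'$ inducing (vertexwise) a bijection $F\to F'$ commuting with flip operators, $g$ a bijection from the labels of paths of $F$ onto those of $F'$ such that a path with labels $(t_1,\dots,t_h)$ goes to one with labels $(g(t_1),\dots,g(t_h))$, and $g$ order-preserving for the lexicographic orders of transpositions ($(a,b)<(c,d)$, $a<b$, $c<d$, iff $a<c$, or $a=c$ and $b<d$). *)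

(* Permutations of [n] are 'S_n = {perm 'I_n} (values 0..n-1).
   MathComp convention: (x * t) i = t (x i), so the paper's y x^{-1} = t
   (i.e. y = t o x) reads y = x * t, i.e. t = x^-1 * y here. *)
From mathcomp Require Import all_boot all_order all_fingroup.
Set Implicit Arguments. Unset Strict Implicit. Unset Printing Implicit Defensive.

Section BruhatDefs.
Variable n : nat.

Definition is_transp (t : 'S_n) : bool :=
  [exists a : 'I_n, exists b : 'I_n, (a != b) && (t == tperm a b)].

Definition is_simple (t : 'S_n) : bool :=
  [exists a : 'I_n, exists b : 'I_n, (val b == (val a).+1) && (t == tperm a b)].

Definition has_word (w : 'S_n) (k : nat) : bool :=
  [exists s : k.-tuple 'S_n, all is_simple s && ((\prod_(t <- s) t)%g == w)].

(* Coxeter length: least k such that w is a product of k simple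
   transpositions (every w has such a word of length <= n*n). *)
Definition ell (w : 'S_n) : nat := find (has_word w) (iota 0 (n * n).+1).

(* Bruhat graph edge x -> y : y x^{-1} in T (paper convention) and l(x) < l(y) *)
Definition bedge (x y : 'S_n) : bool := is_transp (x^-1 * y)%g && (ell x < ell y).

Variable h : nat.
(* A candidate path of length h is a (h+1)-tuple of vertices x_0..x_h *)
Definition vx (G : h.+1.-tuple 'S_n) (i : nat) : 'S_n := nth 1%g G i.

Definition is_path (G : h.+1.-tuple 'S_n) : bool :=
  [forall i : 'I_h, bedge (vx G i) (vx G i.+1)].

(* i-th label l_i, i in [h]:  x_{i-1} -l_i-> x_i *)
Definition lab (G : h.+1.-tuple 'S_n) (i : nat) : 'S_n := ((vx G i.-1)^-1 * vx G i)%g.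

Definition flip (i : nat) (G : h.+1.-tuple 'S_n) : h.+1.-tuple 'S_n :=
  if (0 < i < h) then
    match [pick z | (z != vx G i) && bedge (vx G i.-1) z && bedge z (vx G i.+1)] with
    | Some z => [tuple if val j == i then z else tnth G j | j < h.+1]
    | None => G
    end
  else G.

Definition flipstep : rel (h.+1.-tuple 'S_n) :=
  fun G G' => [exists i : 'I_h, G' == flip i G].

Definition is_flipclass (F : {set h.+1.-tuple 'S_n}) : Prop :=
  exists G, is_path G /\ F = [set G' | connect flipstep G G'].

Definition moved (G : h.+1.-tuple 'S_n) : {set 'I_n} :=
  [set a | [exists i : 'I_h, lab G i.+1 a != a]].
Definition EF (F : {set h.+1.-tuple 'S_n}) : {set 'I_n} :=
  \bigcup_(G in F) moved G.

Definition VS (F : {set h.+1.-tuple 'S_n}) : {set 'S_n} :=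
  [set x | [exists G in F, x \in (G : seq 'S_n)]].
Definition ES (F : {set h.+1.-tuple 'S_n}) : rel 'S_n :=
  fun x y => [exists G in F, exists i : 'I_h, (vx G i == x) && (vx G i.+1 == y)].

Definition VTS (F : {set h.+1.-tuple 'S_n}) : {set 'S_n * 'I_h.+1} :=
  [set p | [exists G in F, tnth G p.2 == p.1]].
Definition ETS (F : {set h.+1.-tuple 'S_n}) : rel ('S_n * 'I_h.+1) :=
  fun p q => (val q.2 == (val p.2).+1) &&
             [exists G in F, (tnth G p.2 == p.1) && (tnth G q.2 == q.1)].

Definition LS (F : {set h.+1.-tuple 'S_n}) : {set 'S_n} :=
  [set t | [exists G in F, exists i : 'I_h, lab G i.+1 == t]].

Definition labs (x0 : 'S_n) (s : seq 'S_n) : seq 'S_n :=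
  pairmap (fun x y => (x^-1 * y)%g) x0 s.
Definition incr_path (le : rel 'S_n) (G : h.+1.-tuple 'S_n) : bool :=
  sorted le [seq lab G i | i <- iota 1 h].

End BruhatDefs.

Section Orders.
Variable n : nat.

Definition refl_order (le : rel 'S_n) : Prop :=
  [/\ (forall t, is_transp t -> le t t),
      (forall t u, is_transp t -> is_transp u -> le t u -> le u t -> t = u),
      (forall t u v, is_transp t -> is_transp u -> is_transp v ->
                     le t u -> le u v -> le t v),
      (forall t u, is_transp t -> is_transp u -> le t u || le u t) &
      (forall a b c : 'I_n, a < b -> b < c ->
         (le (tperm a b) (tperm a c) && le (tperm a c) (tperm b c)) ||
         (le (tperm b c) (tperm a c) && le (tperm a c) (tperm a b)))].

Definition lexlt (t u : 'S_n) : bool :=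
  [exists a : 'I_n, exists b : 'I_n, exists c : 'I_n, exists d : 'I_n,
    [&& a < b, c < d, t == tperm a b, u == tperm c d &
        (a < c) || ((a == c) && (b < d))]].
End Orders.

Section Restriction.
Variable n : nat.
Implicit Type E : {set 'I_n}.

(* r_E : E -> [m], order preserving (rank of a inside E) *)
Definition rk E (a : 'I_n) : nat := #|[set b in E | b < a]|.
Definition rkO E (a : 'I_n) : option 'I_#|E| := insub (rk E a).

Definition is_rE_transp E (a b : 'I_n) (s : 'S_#|E|) : bool :=
  match rkO E a, rkO E b with
  | Some a', Some b' => s == tperm a' b'
  | _, _ => false
  end.

(* one-line notation of w, entries not in E deleted, r_E applied *)
Definition oneline E (w : 'S_n) : seq nat :=
  [seq rk E (w i) | i <- enum 'I_n & w i \in E].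

Definition perm_or1 (T : finType) (f : T -> T) : {perm T} :=
  match injectiveP f with ReflectT H => perm H | ReflectF _ => 1%g end.

Definition rE E (w : 'S_n) : 'S_#|E| :=
  perm_or1 (fun j : 'I_#|E| => insubd j (nth 0 (oneline E w) j)).

Definition rE_order E (le : rel 'S_n) : rel 'S_#|E| :=
  fun s t => [exists a : 'I_n, exists b : 'I_n, exists c : 'I_n, exists d : 'I_n,
    (a \in E) && (b \in E) && (c \in E) && (d \in E) &&
    @is_rE_transp E a b s && @is_rE_transp E c d t && le (tperm a b) (tperm c d)].
End Restriction.
Arguments is_rE_transp : clear implicits.
Arguments is_rE_transp {n} E a b s.
Arguments rE : clear implicits.
Arguments rE {n} E w.
Arguments rE_order : clear implicits.
Arguments rE_order {n} E le.
Arguments rkO : clear implicits.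
Arguments rkO {n} E a.

Definition graph_iso (A B : finType) (V1 : {set A}) (E1 : rel A)
  (V2 : {set B}) (E2 : rel B) (f : A -> B) : Prop :=
  [/\ {in V1 &, injective f}, f @: V1 = V2 &
      {in V1 &, forall x y, E1 x y = E2 (f x) (f y)}].

Definition flip_iso (n m h : nat) (F : {set h.+1.-tuple 'S_n})
  (F' : {set h.+1.-tuple 'S_m}) (f g : 'S_n -> 'S_m) : Prop :=
  [/\ {in VS F &, injective f} /\ f @: VS F = VS F',
      [set map_tuple f G | G in F] = F' /\ {in F &, injective (map_tuple f)},
      (forall G i, G \in F -> map_tuple f (flip i G) = flip i (map_tuple f G)),
      ({in LS F &, injective g} /\ g @: LS F = LS F') /\
      (forall G i, G \in F -> 1 <= i <= h -> lab (map_tuple f G) i = g (lab G i)) &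
      {in LS F &, forall t u, lexlt t u -> lexlt (g t) (g u)}].

(* The Coxeter length of [x] is the number of inversions of [x^-1], so whether
   [x -> x (a b)] is a Bruhat edge depends only on the relative order of
   [x^-1 a] and [x^-1 b], which [r_E] preserves when [a] and [b] lie in [E].
   Every label of a path of [F] moves only points of [E], so all vertices of [F]
   lie in one coset [x_0 Sym(E)], on which [r_E] is injective and satisfies
   [r_E (x (a b)) = r_E x (r_E a, r_E b)]. Hence [r_E] maps the Bruhat edges
   inside the coset bijectively onto Bruhat edges, transforming labels by a
   fixed bijection that preserves the lexicographic order and turns [<=] into
   [<=_{r_E}]. Finally, a Bruhat interval of length two has at most two middle
   vertices (for a 3-cycle the three candidates would impose contradictory
   order constraints), so [r_E] commutes with the flips and maps the flip class
   onto a flip class. *)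

From mathcomp Require Import all_boot all_order all_fingroup.
From mathcomp Require Import zify.
Set Implicit Arguments. Unset Strict Implicit. Unset Printing Implicit Defensive.

Lemma find_iota0 (P : pred nat) k N :
  P k -> (forall j, j < k -> ~~ P j) -> k < N -> find P (iota 0 N) = k.
Proof.
move=> Pk notP kN.
have hs : has P (iota 0 N) by apply/hasP; exists k; rewrite ?mem_iota.
case: (ltngtP (find P (iota 0 N)) k) => // c.
- have := nth_find 0 hs; rewrite nth_iota ?add0n; first by move/negP: (notP _ c).
  exact: ltn_trans kN.
- by have := before_find 0 c; rewrite nth_iota ?add0n ?Pk.
Qed.

Section Inversions.
Variable n : nat.
Implicit Types (f x w : 'S_n) (a b : 'I_n).

Definition inversions f : {set 'I_n * 'I_n} :=
  [set p : 'I_n * 'I_n | (p.1 < p.2) && (f p.2 < f p.1)].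
Definition ninv f := #|inversions f|.

Lemma inversionsE f (p : 'I_n * 'I_n) : (p \in inversions f) = (p.1 < p.2) && (f p.2 < f p.1).
Proof. by rewrite inE. Qed.

(* Injects the inversions of [f] into those of [tperm a b * f] when [a < b] and [f a < f b]. *)
Definition tperm_pair a b (p : 'I_n * 'I_n) :=
  if tperm a b p.1 < tperm a b p.2 then (tperm a b p.1, tperm a b p.2) else p.

Lemma tperm_pair_inj a b :
  {in [pred p : 'I_n * 'I_n | p.1 < p.2] &, injective (tperm_pair a b)}.
Proof.
move=> [x1 y1] [x2 y2]; rewrite !inE /= /tperm_pair /= => lt1 lt2.
case: ifP => c1; case: ifP => c2 //.
- by case=> /perm_inj -> /perm_inj ->.
- by case=> e1 e2; move: c2; rewrite -e1 -e2 !tpermK lt1.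
- by case=> e1 e2; move: c1; rewrite e1 e2 !tpermK lt2.
Qed.

Lemma card_tperm_pair a b f : #|tperm_pair a b @: inversions f| = ninv f.
Proof.
apply: card_in_imset => p q; rewrite !inversionsE => /andP[pl _] /andP[ql _].
exact: tperm_pair_inj.
Qed.

Lemma perm_gtn f (x y : 'I_n) : x < y -> ~~ (f x < f y) -> f y < f x.
Proof.
move=> xy; rewrite -leqNgt leq_eqVlt => /orP [/eqP e|//].
by move: xy; rewrite (perm_inj (val_inj e)) ltnn.
Qed.

Lemma tperm_reversed_pair a b (x y : 'I_n) : a < b -> x < y ->
  tperm a b y < tperm a b x ->
  [\/ x = a /\ y = b, x = a /\ a < y < b | y = b /\ a < x < b].
Proof.
move=> ab xy.
case: (tpermP a b y) => [?|?|ya yb]; case: (tpermP a b x) => [?|?|xa xb]; subst; try lia.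
- by move=> _; apply: Or31.
- by move=> ?; apply: Or33; split=> //; lia.
- by move=> ?; apply: Or32; split=> //; lia.
Qed.

Lemma tperm_pair_sub a b f : a < b -> f a < f b ->
  tperm_pair a b @: inversions f \subset inversions (tperm a b * f).
Proof.
move=> ab fab; apply/subsetP => q /imsetP [[x y]].
rewrite inversionsE /= => /andP [xy fyx] ->.
rewrite /tperm_pair /=; case: ifP => c.
  by rewrite inversionsE /= c !permM !tpermK.
have r := perm_gtn xy (negbT c).
rewrite inversionsE /= xy !permM /=.
case: (tperm_reversed_pair ab xy r) => [[??]|[? /andP [ay yb]]|[? /andP [ax xb]]]; subst.
- by move: fyx; rewrite ltnNge (ltnW fab).
- by rewrite tpermL tpermD ?neq_ltn ?ay ?yb ?orbT //; apply: ltn_trans fab.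
- by rewrite tpermR tpermD ?neq_ltn ?ax ?xb ?orbT //; apply: ltn_trans fyx.
Qed.

Lemma tperm_pair_notin a b f : a < b -> f a < f b ->
  (a, b) \notin tperm_pair a b @: inversions f.
Proof.
move=> ab fab; apply/imsetP => [[[x y]]]; rewrite inversionsE /= => /andP [xy fyx].
rewrite /tperm_pair /=; case: ifP => c.
  case=> e1 e2; move: xy.
  by rewrite -(tpermK a b x) -(tpermK a b y) -e1 -e2 tpermL tpermR ltnNge ltnW.
by case=> ??; subst; move: fyx; rewrite ltnNge ltnW.
Qed.

Lemma ninv_lt_tperm a b f : a < b -> f a < f b -> ninv f < ninv (tperm a b * f).
Proof.
move=> ab fab; rewrite -(card_tperm_pair a b) /ninv.
apply: proper_card; rewrite properE tperm_pair_sub //=; apply/subsetPn.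
exists (a, b); last exact: tperm_pair_notin.
by rewrite inversionsE /= ab !permM tpermL tpermR.
Qed.

Lemma ninv_adj_tperm a b f : b = a.+1 :> nat -> f a < f b ->
  ninv (tperm a b * f) = (ninv f).+1.
Proof.
move=> eb fab; have ab : a < b by rewrite eb.
rewrite /ninv.
have -> : inversions (tperm a b * f) = (a, b) |: (tperm_pair a b @: inversions f).
  apply/eqP; rewrite eqEsubset; apply/andP; split; last first.
    rewrite subUset tperm_pair_sub // andbT sub1set.
    by rewrite inversionsE /= ab !permM tpermL tpermR.
  apply/subsetP => [[x y]]; rewrite inversionsE /= !permM => /andP [xy fxy].
  rewrite !inE; case: (eqVneq (x, y) (a, b)) => //= ne.
  case: (boolP (tperm a b x < tperm a b y)) => c; last first.
    case: (tperm_reversed_pair ab xy (perm_gtn xy c)) => [[??]|[]|[]]; try lia.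
    by subst; rewrite eqxx in ne.
  apply/imsetP; exists (tperm a b x, tperm a b y); first by rewrite inversionsE /= c.
  by rewrite /tperm_pair /= !tpermK xy.
by rewrite cardsU1 tperm_pair_notin // card_tperm_pair.
Qed.

Lemma ninv_adj_tperm_le a b f : b = a.+1 :> nat -> ninv (tperm a b * f) <= (ninv f).+1.
Proof.
move=> eb; have ab : a != b by apply/eqP => e; move: eb; rewrite e; lia.
case: (ltngtP (f a) (f b)) => [fab|fba|/val_inj/perm_inj e]; last by rewrite e eqxx in ab.
  by rewrite ninv_adj_tperm.
have := @ninv_adj_tperm a b (tperm a b * f) eb; rewrite !permM tpermL tpermR => /(_ fba).
by rewrite mulgA tperm2 mul1g => ->; apply/leqW/ltnW.
Qed.

Lemma increasing_of_adjacent (g : 'I_n -> 'I_n) :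
  (forall a b : 'I_n, b = a.+1 :> nat -> g a < g b) ->
  forall i j : 'I_n, i < j -> g i < g j.
Proof.
move=> gS.
have gD : forall k (i j : 'I_n), j = i + k.+1 :> nat -> g i < g j.
  elim=> [|k IH] i j e; first by apply: gS; rewrite e addn1.
  have lt : i + k.+1 < n by move: (ltn_ord j); lia.
  apply: (ltn_trans (IH i (Ordinal lt) erefl)); apply: gS => /=; lia.
by move=> i j ij; apply: (gD (j - i.+1)); lia.
Qed.

Lemma increasing_ge (g : 'I_n -> 'I_n) :
  (forall i j : 'I_n, i < j -> g i < g j) -> forall i : 'I_n, i <= g i.
Proof.
move=> gI.
have gk : forall k (i : 'I_n), i = k :> nat -> k <= g i.
  elim=> [|k IH] i e //.
  have lt : k < n by move: (ltn_ord i); lia.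
  have := IH (Ordinal lt) erefl; have := gI (Ordinal lt) i; rewrite /= e ltnSn.
  by move=> /(_ isT); lia.
by move=> i; apply: gk.
Qed.

Lemma no_descent_perm1 f : (forall a b : 'I_n, b = a.+1 :> nat -> f a < f b) -> f = 1%g.
Proof.
move=> fS; have fI := increasing_of_adjacent fS.
have fVI : forall i j : 'I_n, i < j -> f^-1%g i < f^-1%g j.
  move=> i j ij; case: (ltngtP (f^-1%g i) (f^-1%g j)) => // c.
    by have := fI _ _ c; rewrite !permKV ltnNge (ltnW ij).
  by move: ij; rewrite -(permKV f i) -(permKV f j) (val_inj c) ltnn.
apply/permP => i; rewrite perm1; apply/val_inj/eqP; rewrite eqn_leq.
apply/andP; split; last exact: increasing_ge.
by have := increasing_ge fVI (f i); rewrite permK.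
Qed.

Lemma ninv1 : ninv 1%g = 0.
Proof.
apply/eqP; rewrite cards_eq0; apply/eqP/setP => p.
by rewrite inversionsE !perm1 inE; case: ltngtP.
Qed.

Lemma ninv_eq0 f : ninv f = 0 -> f = 1%g.
Proof.
move/eqP; rewrite cards_eq0 => /eqP inv0; apply: no_descent_perm1 => a b eb.
case: (ltngtP (f a) (f b)) => // c.
  have : (a, b) \in inversions f by rewrite inversionsE /= c eb ltnSn.
  by rewrite inv0 inE.
by move: eb; rewrite (perm_inj (val_inj c)); lia.
Qed.

Lemma exists_descent f : f != 1%g ->
  exists a b : 'I_n, b = a.+1 :> nat /\ f b < f a.
Proof.
move=> f1.
have [|nD] := boolP [exists a : 'I_n, exists b : 'I_n, (b == a.+1 :> nat) && (f b < f a)].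
  by case/existsP => a /existsP [b /andP [/eqP e c]]; exists a, b.
case/eqP: f1; apply: no_descent_perm1 => a b eb.
case: (ltngtP (f a) (f b)) => // [fba|/val_inj/perm_inj e]; last by move: eb; rewrite e; lia.
by case/negP: nD; apply/existsP; exists a; apply/existsP; exists b; rewrite eb eqxx.
Qed.

Lemma has_word_ninv w : has_word w (ninv w^-1).
Proof.
move e : (ninv w^-1) => k; elim: k w e => [|k IH] w e.
  apply/existsP; exists [tuple]; rewrite /= big_nil.
  by rewrite -[w]invgK (ninv_eq0 e) invg1.
have : w^-1%g != 1%g by apply/eqP => w1; move: e; rewrite w1 ninv1.
case/exists_descent => a [b [eb fba]].
have e' : ninv (w * tperm a b)^-1 = k.
  rewrite invMg tpermV.
  have := @ninv_adj_tperm a b (tperm a b * w^-1) eb; rewrite !permM tpermL tpermR.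
  by move=> /(_ fba); rewrite mulgA tperm2 mul1g e => -[].
case/existsP: (IH _ e') => s /andP [simple_s ps].
apply/existsP; exists [tuple of rcons s (tperm a b)]; rewrite /= all_rcons simple_s andbT.
rewrite big_rcons /= (eqP ps) -mulgA tperm2 mulg1 eqxx andbT.
by apply/existsP; exists a; apply/existsP; exists b; rewrite eqxx -eb eqxx.
Qed.

Lemma ninv_le_word k w : has_word w k -> ninv w^-1 <= k.
Proof.
case/existsP => -[s /= /eqP <-] /andP [simple_s /eqP <-].
elim/last_ind: s simple_s => [|s t IH]; first by rewrite big_nil invg1 ninv1.
rewrite all_rcons => /andP [/existsP [a /existsP [b /andP [/eqP eb /eqP ->]]] simple_s].
rewrite big_rcons /= invMg size_rcons tpermV.
by apply: leq_trans (ninv_adj_tperm_le _ eb) _; rewrite ltnS IH.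
Qed.

Lemma ell_ninv w : ell w = ninv w^-1.
Proof.
apply: find_iota0; first exact: has_word_ninv.
  by move=> j jlt; apply/negP => /ninv_le_word; rewrite leqNgt jlt.
by rewrite ltnS; apply: leq_trans (max_card _) _; rewrite card_prod card_ord.
Qed.

Lemma ell_mul_tperm_lt x a b : a < b ->
  (ell x < ell (x * tperm a b)%g) = (x^-1%g a < x^-1%g b).
Proof.
move=> ab; rewrite !ell_ninv invMg tpermV.
case: (ltngtP (x^-1%g a) (x^-1%g b)) => [c|c|/val_inj/perm_inj e]; first exact: ninv_lt_tperm.
- have := @ninv_lt_tperm a b (tperm a b * x^-1) ab; rewrite !permM tpermL tpermR.
  by move=> /(_ c); rewrite mulgA tperm2 mul1g => /ltnW; rewrite leqNgt => /negbTE.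
- by move: ab; rewrite e ltnn.
Qed.

Lemma ell_mul_tperm x a b : a != b ->
  (ell x < ell (x * tperm a b)%g) = ((a < b) == (x^-1%g a < x^-1%g b)).
Proof.
rewrite neq_ltn => /orP [ab|ba]; first by rewrite ell_mul_tperm_lt // ab.
have -> : (a < b) = false by rewrite ltnNge ltnW.
rewrite tpermC ell_mul_tperm_lt //.
by case: ltngtP => // /val_inj/perm_inj e; move: ba; rewrite e ltnn.
Qed.

End Inversions.

Lemma card_set_count (T : finType) (p : pred T) : #|[set x | p x]| = count p (enum T).
Proof.
rewrite cardE /enum_mem size_filter -enumT count_filter.
by apply: eq_count => x; rewrite !inE /= andbT.
Qed.

Lemma nth_count_sorted n (s : seq 'I_n) i : sorted <%O s -> i \in s ->
  nth i s (count (fun j : 'I_n => j < i) s) = i.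
Proof.
move=> ss si; have := Order.POrderTheory.count_lt_nth i ss.
move=> /(_ (index i s)); rewrite index_mem nth_index // => /(_ si) ci.
by rewrite [count _ _]ci nth_index.
Qed.

Section Rank.
Variable n : nat.
Implicit Types (A : {set 'I_n}) (a b : 'I_n).

Lemma rk_ltn_card A a : a \in A -> rk A a < #|A|.
Proof.
move=> aA; apply: proper_card; rewrite properE; apply/andP; split.
  by apply/subsetP => b; rewrite inE => /andP [].
by apply/subsetPn; exists a; rewrite // inE ltnn andbF.
Qed.

Lemma rk_ltn A a b : a \in A -> a < b -> rk A a < rk A b.
Proof.
move=> aA ab; apply: proper_card; rewrite properE; apply/andP; split.
  by apply/subsetP => c; rewrite !inE => /andP [-> ca]; apply: ltn_trans ab.
by apply/subsetPn; exists a; rewrite !inE ?aA ?ab // ltnn andbF.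
Qed.

Lemma ltn_rk A a b : a \in A -> b \in A -> (rk A a < rk A b) = (a < b).
Proof.
move=> aA bA; case: (ltngtP a b) => c; first exact: rk_ltn.
  by apply/negbTE; rewrite -leqNgt ltnW // rk_ltn.
by rewrite (val_inj c) ltnn.
Qed.

Lemma rk_inj A : {in A &, injective (rk A)}.
Proof.
move=> a b aA bA e; case: (ltngtP a b) => c; last exact: val_inj.
- by have := rk_ltn aA c; rewrite e ltnn.
- by have := rk_ltn bA c; rewrite e ltnn.
Qed.

Lemma rk_surj A j : j < #|A| -> exists2 a, a \in A & rk A a = j.
Proof.
move=> jA; set L := [seq rk A a | a <- enum A].
have uL : uniq L by rewrite map_inj_in_uniq ?enum_uniq // => a b; rewrite !mem_enum; apply: rk_inj.
have sL : {subset L <= iota 0 #|A|}.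
  by move=> k /mapP [a]; rewrite mem_enum mem_iota add0n => aA ->; rewrite rk_ltn_card.
have sz : size (iota 0 #|A|) <= size L by rewrite size_iota size_map -cardE.
have [_ eL] := uniq_min_size uL sL sz.
have : j \in L by rewrite eL mem_iota.
by case/mapP => a; rewrite mem_enum => aA ->; exists a.
Qed.

Lemma rkO_some A a : a \in A -> exists a' : 'I_#|A|, rkO A a = Some a'.
Proof. by move=> aA; rewrite /rkO insubT ?rk_ltn_card //= => lt; eexists. Qed.

Lemma rkO_val A a (a' : 'I_#|A|) : rkO A a = Some a' -> val a' = rk A a.
Proof. by rewrite /rkO; case: insubP => // u _ <- [<-]. Qed.

Lemma rkO_surj A (a' : 'I_#|A|) : exists2 a, a \in A & rkO A a = Some a'.
Proof.
have [a aA ea] := rk_surj (ltn_ord a').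
by exists a => //; rewrite /rkO insubT ?rk_ltn_card // => lt; congr Some; apply: val_inj.
Qed.

Lemma rkO_eq A a b (a' b' : 'I_#|A|) : a \in A -> b \in A ->
  rkO A a = Some a' -> rkO A b = Some b' -> (a' == b') = (a == b).
Proof.
move=> aA bA ha hb; apply/eqP/eqP => [e|eab]; last by move: ha; rewrite eab hb => -[].
by apply: (rk_inj aA bA); rewrite -(rkO_val ha) -(rkO_val hb) e.
Qed.

Lemma rkO_ltn A a b (a' b' : 'I_#|A|) : a \in A -> b \in A ->
  rkO A a = Some a' -> rkO A b = Some b' -> (a' < b') = (a < b).
Proof. by move=> aA bA ha hb; rewrite (rkO_val ha) (rkO_val hb) ltn_rk. Qed.

End Rank.

Section Transpositions.
Variable n : nat.
Implicit Types (a b c d p : 'I_n) (s t : 'S_n).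

Lemma is_transpP t : reflect (exists a b, a != b /\ t = tperm a b) (is_transp t).
Proof.
apply: (iffP existsP) => [[a /existsP [b /andP [ab /eqP ->]]]|[a [b [ab ->]]]].
  by exists a, b.
by exists a; apply/existsP; exists b; rewrite ab eqxx.
Qed.

Lemma is_transp_tperm a b : a != b -> is_transp (tperm a b).
Proof. by move=> ab; apply/is_transpP; exists a, b. Qed.

Lemma transp_neq1 t : is_transp t -> t != 1%g.
Proof.
case/is_transpP => a [b [ab ->]]; apply/eqP => /permP /(_ a).
by rewrite tpermL perm1 => e; move: ab; rewrite e eqxx.
Qed.

Lemma transp_moved s p : is_transp s -> s p != p -> s = tperm p (s p).
Proof.
case/is_transpP => a [b [ab ->]]; case: (tpermP a b p) => [->|->|] //.
- by rewrite tpermC.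
- by move=> _ _; rewrite eqxx.
Qed.

Lemma eq_tperm a b c d : a != b -> tperm a b = tperm c d ->
  (c = a /\ d = b) \/ (c = b /\ d = a).
Proof.
move=> ab e; move: (congr1 (fun f : 'S_n => f a) e) => /=; rewrite tpermL.
case: (tpermP c d a) => [->|->|_ _ ba]; [by left|by right|by rewrite ba eqxx in ab].
Qed.

End Transpositions.

Section OneLine.
Variables (n : nat) (E : {set 'I_n}).
Implicit Types (a b c i : 'I_n) (s x y : 'S_n).

(* The positions of the entries of the one-line notation of [x] kept by [r_E]. *)
Definition epos x : {set 'I_n} := x @^-1: E.
Definition epos_seq x := [seq i <- enum 'I_n | x i \in E].

Lemma card_epos x : #|epos x| = #|E|.
Proof. exact/card_preimset/perm_inj. Qed.

Lemma size_epos_seq x : size (epos_seq x) = #|E|.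
Proof. by rewrite size_filter -(card_epos x) -card_set_count. Qed.

Lemma count_epos_seq x i : count (fun j : 'I_n => j < i) (epos_seq x) = rk (epos x) i.
Proof.
rewrite count_filter /rk -card_set_count; apply: eq_card => j.
by rewrite !inE andbC.
Qed.

Lemma oneline_nth x i : x i \in E -> nth 0 (oneline E x) (rk (epos x) i) = rk E (x i).
Proof.
move=> xi; rewrite /oneline (nth_map i); last first.
  by rewrite -/(epos_seq x) size_epos_seq -(card_epos x) rk_ltn_card // inE.
rewrite -/(epos_seq x) -count_epos_seq nth_count_sorted //; last by rewrite mem_filter xi mem_enum.
apply: sorted_filter; first exact: Order.POrderTheory.lt_trans.
by have := iota_ltn_sorted 0 n; rewrite -val_enum_ord sorted_map.
Qed.

Lemma epos_rk_surj x (j : 'I_#|E|) : exists2 i, x i \in E & rk (epos x) i = j.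
Proof.
have : (j : nat) < #|epos x| by rewrite card_epos.
by case/rk_surj => i; rewrite inE => xi e; exists i.
Qed.

Lemma epos_rk_ord x i : x i \in E -> exists j : 'I_#|E|, val j = rk (epos x) i.
Proof.
move=> xi; have lt : rk (epos x) i < #|E| by rewrite -(card_epos x) rk_ltn_card // inE.
by exists (Ordinal lt).
Qed.

Definition oneline_fun x (j : 'I_#|E|) : 'I_#|E| := insubd j (nth 0 (oneline E x) j).

Lemma oneline_fun_val x (j : 'I_#|E|) i : x i \in E -> rk (epos x) i = j ->
  val (oneline_fun x j) = rk E (x i).
Proof.
by move=> xi e; rewrite /oneline_fun -e oneline_nth // insubdK // unfold_in /= rk_ltn_card.
Qed.

Lemma oneline_fun_inj x : injective (oneline_fun x).
Proof.
move=> j1 j2 e.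
have [i1 xi1 e1] := epos_rk_surj x j1; have [i2 xi2 e2] := epos_rk_surj x j2.
move: (congr1 val e); rewrite (oneline_fun_val xi1 e1) (oneline_fun_val xi2 e2).
by move/(rk_inj xi1 xi2)/perm_inj => ei; apply: val_inj; rewrite /= -e1 -e2 ei.
Qed.

Lemma rE_val x (j : 'I_#|E|) i : x i \in E -> rk (epos x) i = j ->
  val (rE E x j) = rk E (x i).
Proof.
move=> xi e; rewrite /rE /perm_or1; case: injectiveP => [inj|[]]; last exact: oneline_fun_inj.
by rewrite permE; apply: oneline_fun_val.
Qed.

Lemma perm_on_tperm a b : a \in E -> b \in E -> perm_on E (tperm a b).
Proof. by move=> aE bE; apply: subset_trans (tperm_on a b) _; rewrite subUset !sub1set aE. Qed.

Lemma epos_mul x s : perm_on E s -> epos (x * s) = epos x.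
Proof. by move=> sE; apply/setP => i; rewrite !inE permM perm_closed. Qed.

Lemma rk_tperm a b (a' b' : 'I_#|E|) c (c' : 'I_#|E|) : a \in E -> b \in E ->
  rkO E a = Some a' -> rkO E b = Some b' -> c \in E -> val c' = rk E c ->
  val (tperm a' b' c') = rk E (tperm a b c).
Proof.
move=> aE bE ha hb cE ec.
case: (tpermP a b c) => [ea|eb|na nb].
- subst c; have -> : c' = a' by apply: val_inj; rewrite ec (rkO_val ha).
  by rewrite tpermL (rkO_val hb).
- subst c; have -> : c' = b' by apply: val_inj; rewrite ec (rkO_val hb).
  by rewrite tpermR (rkO_val ha).
- rewrite tpermD //; apply/eqP => e.
  + by move: na; rewrite (rk_inj aE cE) ?eqxx // -(rkO_val ha) e ec.
  + by move: nb; rewrite (rk_inj bE cE) ?eqxx // -(rkO_val hb) e ec.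
Qed.

Lemma rE_mul_tperm x a b (a' b' : 'I_#|E|) : a \in E -> b \in E ->
  rkO E a = Some a' -> rkO E b = Some b' ->
  rE E (x * tperm a b)%g = (rE E x * tperm a' b')%g.
Proof.
move=> aE bE ha hb; apply/permP => j; apply: val_inj.
have [i xi e] := epos_rk_surj x j.
have xti : (x * tperm a b)%g i \in E by rewrite permM perm_closed // perm_on_tperm.
rewrite (rE_val xti _) ?epos_mul ?perm_on_tperm // !permM.
by rewrite (rk_tperm aE bE ha hb xi (rE_val xi e)).
Qed.

Lemma rEV_val x a (a' : 'I_#|E|) : a \in E -> rkO E a = Some a' ->
  val ((rE E x)^-1%g a') = rk (epos x) (x^-1%g a).
Proof.
move=> aE ha; have xi : x (x^-1%g a) \in E by rewrite permKV.
have [j ej] := epos_rk_ord xi.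
have <- : rE E x j = a' by apply: val_inj; rewrite (rE_val xi (esym ej)) permKV (rkO_val ha).
by rewrite permK ej.
Qed.

Lemma rEV_ltn x a b (a' b' : 'I_#|E|) : a \in E -> b \in E ->
  rkO E a = Some a' -> rkO E b = Some b' ->
  ((rE E x)^-1%g a' < (rE E x)^-1%g b') = (x^-1%g a < x^-1%g b).
Proof.
move=> aE bE ha hb; rewrite (rEV_val x aE ha) (rEV_val x bE hb) ltn_rk //.
all: by rewrite inE permKV.
Qed.

(* By [ell_mul_tperm], the length test only sees the relative order of [x^-1 a] and [x^-1 b], which [r_E] preserves. *)
Lemma bedge_rE_mul_tperm x a b (a' b' : 'I_#|E|) : a \in E -> b \in E -> a != b ->
  rkO E a = Some a' -> rkO E b = Some b' ->
  bedge (rE E x) (rE E (x * tperm a b)%g) = bedge x (x * tperm a b)%g.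
Proof.
move=> aE bE ab ha hb; rewrite (rE_mul_tperm x aE bE ha hb) /bedge !mulKg.
have ab' : a' != b' by rewrite (rkO_eq aE bE ha hb).
rewrite !is_transp_tperm //= !ell_mul_tperm //.
by rewrite (rkO_ltn aE bE ha hb) (rEV_ltn x aE bE ha hb).
Qed.

Lemma rE_inj x y : perm_on E (x^-1 * y)%g -> rE E x = rE E y -> x = y.
Proof.
move=> sE e; set s := (x^-1 * y)%g in sE.
have ey : y = (x * s)%g by rewrite /s mulKVg.
have ep : epos y = epos x by rewrite ey epos_mul.
apply/permP => i; case: (boolP (x i \in E)) => xi; last by rewrite ey permM (out_perm sE).
have yi : y i \in E by rewrite ey permM perm_closed.
have [j ej] := epos_rk_ord xi.
have ej' : rk (epos y) i = j by rewrite ep ej.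
have := rE_val yi ej'.
by rewrite -e (rE_val xi (esym ej)) => /(rk_inj xi yi).
Qed.

End OneLine.

Section LengthTwoPaths.
Variable n : nat.
Implicit Types (p q : 'I_n) (s t u v w x z : 'S_n).

Definition bpath2 u z v := bedge u z && bedge z v.

(* Every middle vertex of a length-two path from [u] to [v] is of this form ([middle_vertexP]). *)
Definition middle u v p := (u * tperm p ((u^-1 * v)%g p))%g.

Lemma bpath2_neq1 u z v : bpath2 u z v -> (u^-1 * v)%g != 1%g.
Proof.
case/andP => /andP [_ uz] /andP [_ zv]; rewrite -(inj_eq (mulgI u)) mulKVg mulg1.
by apply/eqP => e; move: (ltn_trans uz zv); rewrite e ltnn.
Qed.

Lemma transp_factor_moved w t : w != 1%g -> is_transp t -> is_transp (t * w)%g ->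
  exists p, w p != p /\ t = tperm p (w p).
Proof.
move=> w1 /is_transpP [a [b [ab et]]] st; set s := (t * w)%g in st.
have sa : s a = w b by rewrite /s permM et tpermL.
have sb : s b = w a by rewrite /s permM et tpermR.
case: (eqVneq (w a) b) => [wa|wa]; first by exists a; rewrite wa et eq_sym.
case: (eqVneq (w b) a) => [wb|wb]; first by exists b; rewrite wb et tpermC.
have es : s = tperm a (s a) by apply: transp_moved; rewrite // sa.
have: s b = b.
  case: (eqVneq (s a) b) => [sab|sab]; last by rewrite es tpermD // eq_sym.
  by case/eqP: w1; rewrite -[w](mulKg t) -/s es sab -et mulVg.
by move/eqP; rewrite sb (negbTE wa).
Qed.

Lemma middle_vertexP u z v : bpath2 u z v ->
  exists p, [/\ (u^-1 * v)%g p != p, z = middle u v p &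
                is_transp (tperm p ((u^-1 * v)%g p) * (u^-1 * v))%g].
Proof.
move=> uzv; have w1 := bpath2_neq1 uzv; case/andP: uzv => /andP [tt _] /andP [st _].
have tV : (u^-1 * z)^-1%g = (u^-1 * z)%g.
  by case/is_transpP: tt => a [b [_ ->]]; rewrite tpermV.
have {}st : is_transp ((u^-1 * z) * (u^-1 * v))%g by rewrite -tV invMg invgK mulgA mulgK.
have [p [wp et]] := transp_factor_moved w1 tt st.
by exists p; rewrite /middle -et mulKVg.
Qed.

Lemma middle_orders u v q : let w := (u^-1 * v)%g in
  w (w q) != q -> w q != q -> bpath2 u (middle u v q) v ->
  ((q < w q) == (u^-1%g q < u^-1%g (w q))) /\
  ((q < w (w q)) == (u^-1%g (w q) < u^-1%g (w (w q)))).
Proof.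
move=> w wwq wq; rewrite /middle -/w; set T := tperm q (w q).
rewrite /bpath2 /bedge mulKg => /andP [/andP [_ c1] /andP [st c2]].
split; first by rewrite -ell_mul_tperm // eq_sym.
set s := ((u * T)^-1 * v)%g in st.
have sq : s q = w (w q) by rewrite /s invMg tpermV -mulgA permM tpermL.
have ev : v = (u * T * tperm q (w (w q)))%g.
  by rewrite -sq -(transp_moved st _) ?sq // /s mulKVg.
move: c2; rewrite {1}ev ell_mul_tperm 1?eq_sym //.
have inv_app y : (u * T)^-1%g y = u^-1%g (T y) by rewrite invMg tpermV permM.
rewrite !inv_app tpermL tpermD 1?eq_sym //.
by rewrite (inj_eq perm_inj).
Qed.

Lemma three_orders_contra (q0 q1 q2 r0 r1 r2 : nat) :
  q0 != q1 -> q1 != q2 -> q0 != q2 -> r0 != r1 -> r1 != r2 -> r0 != r2 ->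
  (q0 < q1) == (r0 < r1) -> (q1 < q2) == (r1 < r2) -> (q2 < q0) == (r2 < r0) ->
  (q0 < q2) == (r1 < r2) -> (q1 < q0) == (r2 < r0) -> (q2 < q1) == (r0 < r1) -> False.
Proof.
case: (ltngtP q0 q1) => h1; case: (ltngtP q1 q2) => h2; case: (ltngtP q0 q2) => h3;
case: (ltngtP r0 r1) => h4; case: (ltngtP r1 r2) => h5; case: (ltngtP r0 r2) => h6;
rewrite ?eqxx //=; lia.
Qed.

Lemma three_cycle_middle_contra u v q0 : let w := (u^-1 * v)%g in
  w (w q0) != q0 -> w q0 != q0 -> w (w (w q0)) = q0 ->
  bpath2 u (middle u v q0) v -> bpath2 u (middle u v (w q0)) v ->
  bpath2 u (middle u v (w (w q0))) v -> False.
Proof.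
move=> w h2 h1 h3 c0 c1 c2.
set q1 := w q0 in h2 h3 h1 c1 c2; set q2 := w q1 in h2 h3 c2.
have n01 : q0 != q1 by rewrite eq_sym.
have n12 : q1 != q2 by rewrite /q2 /q1 (inj_eq (@perm_inj _ w)) eq_sym.
have n02 : q0 != q2 by rewrite eq_sym.
have wwq1 : w (w q1) != q1 by rewrite -/q2 h3 eq_sym.
have wwq2 : w (w q2) != q2 by rewrite h3.
have wq1 : w q1 != q1 by rewrite eq_sym.
have wq2 : w q2 != q2 by rewrite h3.
have [o01 o02] := middle_orders h2 h1 c0.
have [o11 o12] := middle_orders wwq1 wq1 c1.
have [o21 o22] := middle_orders wwq2 wq2 c2.
rewrite -/w -/q1 -/q2 ?h3 -/q1 in o01 o02 o11 o12 o21 o22.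
have uV a b : a != b -> u^-1%g a != u^-1%g b by rewrite (inj_eq perm_inj).
exact: (three_orders_contra n01 n12 n02 (uV _ _ n01) (uV _ _ n12) (uV _ _ n02)
          o01 o11 o21 o02 o12 o22).
Qed.

Section Factorisation.
Variables (w : 'S_n) (p0 : 'I_n).
Hypothesis transp_rest : is_transp (tperm p0 (w p0) * w)%g.

Lemma transp_rest_moved p : p != p0 -> p != w p0 -> w p != p ->
  tperm p (w p) = (tperm p0 (w p0) * w)%g.
Proof.
move=> pp0 pwp0 wp; have sp : (tperm p0 (w p0) * w)%g p = w p.
  by rewrite permM tpermD // eq_sym.
by rewrite -sp -(transp_moved transp_rest) ?sp.
Qed.

Lemma transp_rest_3cycle : w (w p0) != p0 -> w p0 != p0 ->
  (tperm p0 (w p0) * w)%g = tperm p0 (w (w p0)) /\ w (w (w p0)) = p0.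
Proof.
move=> wwp0 wp0; set s := (tperm p0 (w p0) * w)%g.
have sp0 : s p0 = w (w p0) by rewrite permM tpermL.
have es : s = tperm p0 (w (w p0)) by rewrite -sp0 -transp_moved // sp0.
split=> //; have ew : w = (tperm p0 (w p0) * s)%g by rewrite mulgA tperm2 mul1g.
have ww_neq : w (w p0) != w p0 by rewrite (inj_eq perm_inj).
by rewrite {1}ew permM tpermD 1?eq_sym // es tpermR.
Qed.

Lemma transp_rest_3cycle_moved p : w (w p0) != p0 -> w p0 != p0 ->
  p != p0 -> w p != p -> p = w p0 \/ p = w (w p0).
Proof.
move=> wwp0 wp0 pp0 wp; case: (eqVneq p (w p0)) => [|pwp0]; [by left|right].
have [es _] := transp_rest_3cycle wwp0 wp0.
have p0ww : p0 != w (w p0) by rewrite eq_sym.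
have := transp_rest_moved pp0 pwp0 wp; rewrite es => /esym/(eq_tperm p0ww).
by case=> [[pe _]|[]] //; rewrite pe eqxx in pp0.
Qed.

End Factorisation.

Lemma middle_vertex_uniq u v x z1 z2 : bpath2 u x v -> bpath2 u z1 v -> bpath2 u z2 v ->
  z1 != x -> z2 != x -> z1 = z2.
Proof.
move=> uxv uz1v uz2v z1x z2x; set w := (u^-1 * v)%g.
have [p0 [wp0 ex s0]] := middle_vertexP uxv.
have [p1 [wp1 ez1 _]] := middle_vertexP uz1v.
have [p2 [wp2 ez2 _]] := middle_vertexP uz2v.
have not_x p : middle u v p != x -> p != p0 /\ (w (w p0) = p0 -> p != w p0).
  move=> px; split=> [|ww]; apply: contra_neq px => ->; rewrite ex // /middle -/w.
  by rewrite ww tpermC.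
have [p10 p1w] : p1 != p0 /\ (w (w p0) = p0 -> p1 != w p0) by apply: not_x; rewrite -ez1.
have [p20 p2w] : p2 != p0 /\ (w (w p0) = p0 -> p2 != w p0) by apply: not_x; rewrite -ez2.
case: (eqVneq (w (w p0)) p0) => [ww|ww].
  rewrite ez1 ez2 /middle -/w (transp_rest_moved s0 p10 (p1w ww) wp1).
  by rewrite (transp_rest_moved s0 p20 (p2w ww) wp2).
have [_ w3] := transp_rest_3cycle s0 ww wp0.
case: (eqVneq p1 p2) => [e12|p12]; first by rewrite ez1 ez2 e12.
move: uxv uz1v uz2v; rewrite ex ez1 ez2 => c0 c1 c2; exfalso.
have [e1|e1] := transp_rest_3cycle_moved s0 ww wp0 p10 wp1;
have [e2|e2] := transp_rest_3cycle_moved s0 ww wp0 p20 wp2;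
  rewrite e1 e2 ?eqxx // in p12 c1 c2.
- exact: (three_cycle_middle_contra ww wp0 w3 c0 c1 c2).
- exact: (three_cycle_middle_contra ww wp0 w3 c0 c2 c1).
Qed.

End LengthTwoPaths.

Section TranspositionsOn.
Variables (n : nat) (E : {set 'I_n}).
Implicit Types (a b c d : 'I_n) (t s u v x y z : 'S_n).

Definition transp_on t := is_transp t && perm_on E t.

Lemma transp_onP t :
  reflect (exists a b, [/\ a \in E, b \in E, a != b & t = tperm a b]) (transp_on t).
Proof.
apply: (iffP andP) => [[/is_transpP [a [b [ab et]]] tE]|[a [b [aE bE ab ->]]]].
  have moved c : t c != c -> c \in E by move=> tc; apply: (subsetP tE).
  by exists a, b; split=> //; apply: moved; rewrite et ?tpermL ?tpermR // eq_sym.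
by split; [apply: is_transp_tperm | apply: perm_on_tperm].
Qed.

Lemma transp_on_perm_on t : transp_on t -> perm_on E t.
Proof. by case/andP. Qed.

Lemma transp_on_tperm t a b : transp_on t -> t = tperm a b -> a \in E /\ b \in E.
Proof.
case/transp_onP => a0 [b0 [aE bE ab0 ->]] e.
by case: (eq_tperm ab0 e) => -[-> ->].
Qed.

Lemma is_rE_transp_rkO a b (a' b' : 'I_#|E|) :
  rkO E a = Some a' -> rkO E b = Some b' -> is_rE_transp E a b (tperm a' b').
Proof. by move=> ha hb; rewrite /is_rE_transp ha hb. Qed.

Lemma is_rE_transp_tperm a b c d (a' b' : 'I_#|E|) :
  a \in E -> b \in E -> c \in E -> d \in E -> a != b ->
  rkO E a = Some a' -> rkO E b = Some b' ->
  is_rE_transp E c d (tperm a' b') -> tperm c d = tperm a b.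
Proof.
move=> aE bE cE dE ab ha hb.
have [c' hc] := rkO_some cE; have [d' hd] := rkO_some dE.
rewrite /is_rE_transp hc hd => /eqP e.
have ab' : a' != b' by rewrite (rkO_eq aE bE ha hb).
have rk_eq (p q : 'I_n) (p' q' : 'I_#|E|) : p \in E -> q \in E ->
    rkO E p = Some p' -> rkO E q = Some q' -> p' = q' -> p = q.
  by move=> pE qE hp hq /eqP; rewrite (rkO_eq pE qE hp hq) => /eqP.
case: (eq_tperm ab' e) => -[e1 e2].
- by rewrite (rk_eq _ _ _ _ cE aE hc ha e1) (rk_eq _ _ _ _ dE bE hd hb e2).
- by rewrite (rk_eq _ _ _ _ cE bE hc hb e1) (rk_eq _ _ _ _ dE aE hd ha e2) tpermC.
Qed.

(* The label bijection [g] of part (4): [r_E] sends an edge [x -> x t] to [r_E x -> r_E x * rlab t]. *)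
Definition rlab t : 'S_#|E| := ((rE E 1)^-1 * rE E t)%g.

Lemma rlab_tperm a b (a' b' : 'I_#|E|) : a \in E -> b \in E ->
  rkO E a = Some a' -> rkO E b = Some b' -> rlab (tperm a b) = tperm a' b'.
Proof.
move=> aE bE ha hb; rewrite /rlab -{1}(mul1g (tperm a b)) (rE_mul_tperm 1 aE bE ha hb).
by rewrite mulKg.
Qed.

Lemma rE_label x y : transp_on (x^-1 * y)%g -> ((rE E x)^-1 * rE E y)%g = rlab (x^-1 * y)%g.
Proof.
case/transp_onP => a [b [aE bE _ et]].
have [a' ha] := rkO_some aE; have [b' hb] := rkO_some bE.
have -> : y = (x * tperm a b)%g by rewrite -et mulKVg.
by rewrite (rE_mul_tperm x aE bE ha hb) mulKg mulKg (rlab_tperm aE bE ha hb).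
Qed.

Lemma bedge_rE x y : transp_on (x^-1 * y)%g -> bedge (rE E x) (rE E y) = bedge x y.
Proof.
case/transp_onP => a [b [aE bE ab et]].
have [a' ha] := rkO_some aE; have [b' hb] := rkO_some bE.
have -> : y = (x * tperm a b)%g by rewrite -et mulKVg.
exact: (bedge_rE_mul_tperm x aE bE ab ha hb).
Qed.

Lemma rlab_inj : {in transp_on &, injective rlab}.
Proof.
move=> t u /transp_onP [a [b [aE bE ab ->]]] /transp_onP [c [d [cE dE cd ->]]].
have [a' ha] := rkO_some aE; have [b' hb] := rkO_some bE.
have [c' hc] := rkO_some cE; have [d' hd] := rkO_some dE.
rewrite (rlab_tperm aE bE ha hb) (rlab_tperm cE dE hc hd) => e.
apply/esym/(is_rE_transp_tperm aE bE cE dE ab ha hb).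
by rewrite e (is_rE_transp_rkO hc hd).
Qed.

Lemma is_rE_transp_rlab t a b : transp_on t -> t = tperm a b -> is_rE_transp E a b (rlab t).
Proof.
move=> tE et; have [aE bE] := transp_on_tperm tE et.
have [a' ha] := rkO_some aE; have [b' hb] := rkO_some bE.
by rewrite et (rlab_tperm aE bE ha hb) (is_rE_transp_rkO ha hb).
Qed.

Lemma rE_order_rlab (le : rel 'S_n) t u : transp_on t -> transp_on u ->
  rE_order E le (rlab t) (rlab u) = le t u.
Proof.
move=> /transp_onP [a [b [aE bE ab ->]]] /transp_onP [c [d [cE dE cd ->]]].
have [a' ha] := rkO_some aE; have [b' hb] := rkO_some bE.
have [c' hc] := rkO_some cE; have [d' hd] := rkO_some dE.
rewrite (rlab_tperm aE bE ha hb) (rlab_tperm cE dE hc hd); apply/existsP/idP.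
  case=> a1 /existsP [b1 /existsP [c1 /existsP [d1]]].
  move=> /andP [/andP [/andP [/andP [/andP [/andP [a1E b1E] c1E] d1E] i1] i2] l].
  by rewrite -(is_rE_transp_tperm aE bE a1E b1E ab ha hb i1)
             -(is_rE_transp_tperm cE dE c1E d1E cd hc hd i2).
move=> l; exists a; apply/existsP; exists b; apply/existsP; exists c; apply/existsP; exists d.
by rewrite aE bE cE dE l (is_rE_transp_rkO ha hb) (is_rE_transp_rkO hc hd).
Qed.

Lemma sorted_rlab (le : rel 'S_n) (s : seq 'S_n) : all transp_on s ->
  sorted (rE_order E le) (map rlab s) = sorted le s.
Proof. by apply: mono_sorted_in => t u tE uE; apply: rE_order_rlab. Qed.

Lemma lexlt_rlab t u : transp_on t -> transp_on u -> lexlt t u -> lexlt (rlab t) (rlab u).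
Proof.
move=> tE uE /existsP [a /existsP [b /existsP [c /existsP [d]]]].
case/and5P => ab cd /eqP et /eqP eu lx.
have [aE bE] := transp_on_tperm tE et; have [cE dE] := transp_on_tperm uE eu.
have [a' ha] := rkO_some aE; have [b' hb] := rkO_some bE.
have [c' hc] := rkO_some cE; have [d' hd] := rkO_some dE.
rewrite et eu (rlab_tperm aE bE ha hb) (rlab_tperm cE dE hc hd).
apply/existsP; exists a'; apply/existsP; exists b'; apply/existsP; exists c'.
apply/existsP; exists d'.
rewrite (rkO_ltn aE bE ha hb) (rkO_ltn cE dE hc hd) ab cd !eqxx /=.
by rewrite (rkO_ltn aE cE ha hc) (rkO_eq aE cE ha hc) (rkO_ltn bE dE hb hd).
Qed.

Lemma is_rE_transp_label x y a b : transp_on (x^-1 * y)%g -> (x^-1 * y)%g = tperm a b ->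
  is_rE_transp E a b ((rE E x)^-1 * rE E y)%g.
Proof. by move=> xyE e; rewrite rE_label //; apply: is_rE_transp_rlab e. Qed.

Lemma labs_rE x0 (s : seq 'S_n) : path [rel x y | transp_on (x^-1 * y)%g] x0 s ->
  labs (rE E x0) (map (rE E) s) = map rlab (labs x0 s) /\ all transp_on (labs x0 s).
Proof.
elim: s x0 => [|y s IH] x0 //= /andP [xyE ps].
by have [-> ->] := IH y ps; rewrite rE_label // xyE.
Qed.

Lemma sorted_labs_rE (le : rel 'S_n) x0 (s : seq 'S_n) :
  path [rel x y | transp_on (x^-1 * y)%g] x0 s ->
  sorted (rE_order E le) (labs (rE E x0) (map (rE E) s)) = sorted le (labs x0 s).
Proof. by case/labs_rE => -> /sorted_rlab ->. Qed.

End TranspositionsOn.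

Section RestrictionOfLengthTwoPaths.
Variables (n : nat) (E : {set 'I_n}).
Implicit Types (t : 'S_n) (u v x y z : 'S_n).

Lemma perm_on_coset u x y : perm_on E (u^-1 * x)%g -> perm_on E (u^-1 * y)%g ->
  perm_on E (x^-1 * y)%g.
Proof.
move=> xE yE; have -> : (x^-1 * y)%g = ((u^-1 * x)^-1 * (u^-1 * y))%g.
  by rewrite invMg invgK mulgA mulgK.
exact: perm_onM (perm_onV xE) yE.
Qed.

Lemma rE_inj_coset u x y : perm_on E (u^-1 * x)%g -> perm_on E (u^-1 * y)%g ->
  rE E x = rE E y -> x = y.
Proof. by move=> xE yE; apply/rE_inj/(perm_on_coset xE yE). Qed.

Lemma rE_mul_transp_lift x (t' : 'S_#|E|) : is_transp t' ->
  exists2 t, transp_on E t & rE E (x * t)%g = (rE E x * t')%g.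
Proof.
case/is_transpP => a' [b' [ab' ->]].
have [a aE ha] := rkO_surj a'; have [b bE hb] := rkO_surj b'.
exists (tperm a b); last exact: rE_mul_tperm.
by apply/transp_onP; exists a, b; rewrite -(rkO_eq aE bE ha hb).
Qed.

Lemma bpath2_transp_on u z v : perm_on E (u^-1 * v)%g -> bpath2 u z v ->
  transp_on E (u^-1 * z)%g /\ transp_on E (z^-1 * v)%g.
Proof.
move=> wE uzv; have [p [wp ez _]] := middle_vertexP uzv.
have pE : p \in E by apply: contraR wp => pE; rewrite (out_perm wE).
have zE : transp_on E (u^-1 * z)%g.
  rewrite ez /middle mulKg; apply/transp_onP; exists p, ((u^-1 * v)%g p).
  by rewrite perm_closed // pE eq_sym.
split=> //; case/andP: uzv => _ /andP [zv _]; rewrite /transp_on zv /=.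
by apply: (perm_on_coset (u := u)) => //; apply: transp_on_perm_on.
Qed.

Lemma rE_bpath2 u z v : perm_on E (u^-1 * v)%g -> bpath2 u z v ->
  bpath2 (rE E u) (rE E z) (rE E v).
Proof.
move=> wE uzv; have [uz zv] := bpath2_transp_on wE uzv.
by rewrite /bpath2 !bedge_rE.
Qed.

Lemma rE_bpath2_lift u (z' : 'S_#|E|) v : perm_on E (u^-1 * v)%g -> bpath2 (rE E u) z' (rE E v) ->
  exists2 z, bpath2 u z v & z' = rE E z.
Proof.
move=> wE /andP [uz' z'v].
have [t tE ez] := rE_mul_transp_lift u (proj1 (andP uz')); rewrite mulKVg in ez.
have [s sE ev] := rE_mul_transp_lift (u * t) (proj1 (andP z'v)); rewrite ez mulKVg in ev.
have {}ev : v = (u * t * s)%g.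
  apply: (rE_inj_coset (u := u)) => //; rewrite -mulgA mulKg.
  by apply: perm_onM; apply: transp_on_perm_on.
have uzE : transp_on E (u^-1 * (u * t))%g by rewrite mulKg.
have zvE : transp_on E ((u * t)^-1 * v)%g by rewrite ev mulKg.
exists (u * t)%g; last by rewrite ez.
by rewrite /bpath2 -(bedge_rE uzE) -(bedge_rE zvE) ez uz'.
Qed.

(* By [middle_vertex_uniq], [r_E] carries the flipped middle vertex to the flipped middle vertex. *)
Lemma pick_middle_rE u x v : perm_on E (u^-1 * v)%g -> bpath2 u x v ->
  [pick z' | (z' != rE E x) && bedge (rE E u) z' && bedge z' (rE E v)] =
  omap (rE E) [pick z | (z != x) && bedge u z && bedge z v].
Proof.
move=> wE uxv; have [xE _] := bpath2_transp_on wE uxv.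
have rE_eq z : bpath2 u z v -> (rE E z == rE E x) = (z == x).
  move=> uzv; have [zE _] := bpath2_transp_on wE uzv.
  by apply/eqP/eqP => [|-> //]; apply: (rE_inj_coset (u := u)); apply: transp_on_perm_on.
case: pickP => [z' /andP [/andP [z'x uz'] z'v]|none'];
  case: pickP => [z /andP [/andP [zx uz] zv]|none] //=.
- have [z2 uz2v ez2] := rE_bpath2_lift wE (introT andP (conj uz' z'v)).
  rewrite ez2 (rE_eq _ uz2v) in z'x; congr Some; rewrite ez2; congr (rE E _).
  exact: (middle_vertex_uniq uxv uz2v (introT andP (conj uz zv)) z'x zx).
- have [z2 uz2v ez2] := rE_bpath2_lift wE (introT andP (conj uz' z'v)).
  move: (none z2) => /=; case/andP: (uz2v) => -> ->.
  by rewrite !andbT -(rE_eq _ uz2v) -ez2 z'x.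
- have uzv : bpath2 u z v by apply/andP.
  move: (none' (rE E z)) => /=; case/andP: (rE_bpath2 wE uzv) => -> ->.
  by rewrite !andbT (rE_eq _ uzv) zx.
Qed.

End RestrictionOfLengthTwoPaths.

Lemma connect_closed_in (T : finType) (e : rel T) (A : {pred T}) x y :
  (forall u v, u \in A -> e u v -> v \in A) -> x \in A -> connect e x y -> y \in A.
Proof.
move=> clA xA /connectP [p ep ->]; elim: p x xA ep => [|z p IH] x xA //= /andP [xz zp].
exact: IH (clA _ _ xA xz) zp.
Qed.

Section Paths.
Variables (n h : nat).
Implicit Types (G : h.+1.-tuple 'S_n).

Lemma vxE G (j : 'I_h.+1) : vx G j = tnth G j.
Proof. by rewrite /vx (tnth_nth 1%g). Qed.

Lemma vx_map m (f : 'S_n -> 'S_m) G j : j <= h -> vx (map_tuple f G) j = f (vx G j).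
Proof. by move=> hj; rewrite /vx (nth_map 1%g) // size_tuple. Qed.

Lemma vx_set G i z j : i <= h ->
  vx [tuple if val k == i then z else tnth G k | k < h.+1] j =
  if j == i then z else vx G j.
Proof.
move=> hi; case: (ltnP j h.+1) => hj.
  by rewrite -[j]/(val (Ordinal hj)) vxE tnth_mktuple vxE.
rewrite /vx !nth_default ?size_tuple //.
by case: eqP => // e; move: hi; rewrite -e; lia.
Qed.

Lemma vx_lab G i : vx G i = (vx G i.-1 * lab G i)%g.
Proof. by rewrite /lab mulKVg. Qed.

Lemma flip_cases G i : flip i G = G \/
  0 < i < h /\ exists z, [/\ z != vx G i, bpath2 (vx G i.-1) z (vx G i.+1) &
     flip i G = [tuple if val j == i then z else tnth G j | j < h.+1]].
Proof.
rewrite /flip; case: ifP => hi; last by left.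
case: pickP => [z /andP [/andP [zx e1] e2]|_]; last by left.
by right; split=> //; exists z; rewrite /bpath2 e1 e2.
Qed.

Lemma is_path_flip G i : is_path G -> is_path (flip i G).
Proof.
move=> pG; case: (flip_cases G i) => [->//|[/andP [i0 ih] [z [zx /andP [e1 e2] ->]]]].
apply/forallP => k; rewrite !vx_set ?(ltnW ih) //.
case: (eqVneq (k : nat) i) => [ki|ki]; first by rewrite ki gtn_eqF.
case: (eqVneq (k : nat).+1 i) => [ki'|ki']; first by rewrite -ki' /= in e1.
exact: (forallP pG k).
Qed.

Lemma flip_vx0 G i : vx (flip i G) 0 = vx G 0.
Proof.
case: (flip_cases G i) => [->//|[/andP [i0 ih] [z [_ _ ->]]]].
by rewrite vx_set ?(ltnW ih) // eq_sym (negbTE (lt0n_neq0 i0)).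
Qed.

Lemma connect_flipstep_path G0 G : is_path G0 -> connect (@flipstep n h) G0 G ->
  is_path G /\ vx G 0 = vx G0 0.
Proof.
move=> pG0 cG.
suff /andP [pG /eqP e] : G \in [pred G | is_path G && (vx G 0 == vx G0 0)] by [].
apply: (connect_closed_in _ _ cG) => [G1 G2 /andP [pG1 /eqP e1] /existsP [i /eqP ->]|].
  by rewrite inE is_path_flip //= flip_vx0 e1 eqxx.
by rewrite inE pG0 eqxx.
Qed.

Lemma path_bedge G j : is_path G -> j < h -> bedge (vx G j) (vx G j.+1).
Proof. by move=> pG jh; apply: (forallP pG (Ordinal jh)). Qed.

Lemma path_bpath2 G i : is_path G -> 0 < i < h -> bpath2 (vx G i.-1) (vx G i) (vx G i.+1).
Proof.
move=> pG /andP [i0 ih]; rewrite /bpath2 path_bedge // andbT.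
by have := @path_bedge G i.-1 pG; rewrite prednK //; apply; apply: ltnW.
Qed.

End Paths.

Section FlipClass.
Variables (n h : nat) (G0 : h.+1.-tuple 'S_n).
Hypothesis pG0 : is_path G0.
Implicit Types (G : h.+1.-tuple 'S_n).

Definition flipclass := [set G | connect (@flipstep n h) G0 G].

Local Notation F := flipclass.
Local Notation E := (EF F).
Local Notation rEp := (map_tuple (rE E)).

Lemma flipclass0 : G0 \in F.
Proof. by rewrite inE connect0. Qed.

Lemma flipclass_path G : G \in F -> is_path G.
Proof. by rewrite inE => /(connect_flipstep_path pG0) []. Qed.

Lemma flipclass_vx0 G : G \in F -> vx G 0 = vx G0 0.
Proof. by rewrite inE => /(connect_flipstep_path pG0) []. Qed.

Lemma flipclass_flip G i : G \in F -> flip i G \in F.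
Proof.
rewrite !inE => cG; case: (flip_cases G i) => [->//|[/andP [_ ih] _]].
by apply: connect_trans cG (connect1 _); apply/existsP; exists (Ordinal ih).
Qed.

Lemma lab_transp_on G i : G \in F -> 0 < i <= h -> transp_on E (lab G i).
Proof.
move=> GF /andP [i0 ih]; have ih' : i.-1 < h by lia.
have /andP [tr _] := path_bedge (flipclass_path GF) ih'; rewrite prednK // -/(lab G i) in tr.
rewrite /transp_on tr /=; apply/subsetP => c; rewrite inE => moved.
apply: (subsetP (bigcup_sup _ GF)); rewrite inE; apply/existsP.
by exists (Ordinal ih'); rewrite /= prednK.
Qed.

Lemma edge_transp_on G j : G \in F -> j < h -> transp_on E ((vx G j)^-1 * vx G j.+1)%g.
Proof. by move=> GF jh; apply: (lab_transp_on GF); rewrite ltn0Sn. Qed.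

(* All vertices of the class lie in the coset [x_0 Sym(E)], on which [r_E] is injective. *)
Lemma vx_perm_on G j : G \in F -> j <= h -> perm_on E ((vx G0 0)^-1 * vx G j)%g.
Proof.
move=> GF; elim: j => [_|j IH jh]; first by rewrite (flipclass_vx0 GF) mulVg perm_on1.
rewrite (vx_lab G j.+1) mulgA; apply: perm_onM; first by apply: IH; apply: ltnW.
by apply: transp_on_perm_on; apply: lab_transp_on; rewrite ?ltn0Sn.
Qed.

Lemma vx_VS G j : G \in F -> j <= h -> vx G j \in VS F.
Proof.
move=> GF jh; rewrite inE; apply/existsP; exists G; rewrite GF /=.
by rewrite /vx mem_nth // size_tuple.
Qed.

Lemma tnth_VS G j : G \in F -> tnth G j \in VS F.
Proof. by move=> GF; rewrite -vxE vx_VS // -ltnS. Qed.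

Lemma VS_perm_on x : x \in VS F -> perm_on E ((vx G0 0)^-1 * x)%g.
Proof.
rewrite inE => /existsP [G /andP [GF /tnthP [j ->]]].
by rewrite -vxE; apply: vx_perm_on => //; rewrite -ltnS.
Qed.

Lemma rE_injVS : {in VS F &, injective (rE E)}.
Proof. by move=> x y xV yV; apply: rE_inj_coset; apply: VS_perm_on. Qed.

Lemma lab_rEp G i : G \in F -> 0 < i <= h -> lab (rEp G) i = rlab E (lab G i).
Proof.
move=> GF hi; rewrite /lab !vx_map; try lia.
by apply: rE_label; apply: lab_transp_on.
Qed.

Lemma rEp_path G : G \in F -> is_path (rEp G).
Proof.
move=> GF; apply/forallP => k; rewrite !vx_map ?(ltnW (ltn_ord k)) //.
by rewrite bedge_rE ?edge_transp_on //; apply: path_bedge (flipclass_path GF) _.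
Qed.

Lemma rEp_inj : {in F &, injective rEp}.
Proof.
move=> G1 G2 G1F G2F e; apply: eq_from_tnth => j.
by have := congr1 (fun T => tnth T j) e; rewrite /= !tnth_map; apply: rE_injVS; apply: tnth_VS.
Qed.

Lemma rEp_flip G i : G \in F -> rEp (flip i G) = flip i (rEp G).
Proof.
move=> GF; rewrite /flip; case: ifP => // /andP [i0 ih].
rewrite !vx_map ?(ltnW ih) //; last by lia.
have uxv := path_bpath2 (flipclass_path GF) (introT andP (conj i0 ih)).
have wE : perm_on E ((vx G i.-1)^-1 * vx G i.+1)%g.
  by apply: (perm_on_coset (u := vx G0 0)); apply: vx_perm_on => //; lia.
rewrite (pick_middle_rE wE uxv); case: pickP => //= z _.
by apply: eq_from_tnth => j; rewrite !(tnth_map, tnth_mktuple); case: ifP.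
Qed.

Lemma rEp_flipclass :
  [set rEp G | G in F] = [set G' | connect (@flipstep #|E| h) (rEp G0) G'].
Proof.
apply/setP => G'; rewrite inE; apply/imsetP/idP => [[G GF ->]|].
  suff /andP [] : G \in [pred G | (G \in F) && connect (@flipstep _ h) (rEp G0) (rEp G)] by [].
  move: GF; rewrite inE => cG; apply: (connect_closed_in _ _ cG).
    move=> G1 G2 /andP [G1F c1] st; rewrite inE.
    case/existsP: st => i /eqP ->; rewrite flipclass_flip //= rEp_flip //.
    by apply: connect_trans c1 (connect1 _); apply/existsP; exists i.
  by rewrite inE flipclass0 connect0.
move=> cG'; apply/imsetP; apply: (connect_closed_in _ _ cG').
  move=> G1' G2' /imsetP [G1 G1F ->] /existsP [i /eqP ->].
  by apply/imsetP; exists (flip i G1); rewrite ?flipclass_flip ?rEp_flip.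
by apply/imsetP; exists G0; rewrite ?flipclass0.
Qed.

End FlipClass.

Section FlipClassGraphs.
Variables (n h : nat) (G0 : h.+1.-tuple 'S_n).
Hypothesis pG0 : is_path G0.
Implicit Types (G : h.+1.-tuple 'S_n) (x y : 'S_n) (p q : 'S_n * 'I_h.+1).

Local Notation F := (flipclass G0).
Local Notation E := (EF F).
Local Notation rEp := (map_tuple (rE E)).
Local Notation F' := [set rEp G | G in F].
Local Notation rEv := (fun p : 'S_n * 'I_h.+1 => (rE E p.1, p.2)).

Lemma is_flipclass_rEp : is_flipclass F'.
Proof. by exists (rEp G0); rewrite rEp_flipclass // rEp_path ?flipclass0. Qed.

Lemma VS_rE : rE E @: VS F = VS F'.
Proof.
apply/setP => x'; apply/imsetP/idP => [[x]|].
  rewrite inE => /existsP [G /andP [GF xG]] ->; rewrite inE; apply/existsP.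
  by exists (rEp G); rewrite imset_f //= map_f.
rewrite inE => /existsP [G' /andP [/imsetP [G GF ->] /mapP [x xG ->]]].
by exists x => //; rewrite inE; apply/existsP; exists G; rewrite GF.
Qed.

Lemma ES_rE : {in VS F &, forall x y, ES F x y = ES F' (rE E x) (rE E y)}.
Proof.
move=> x y xV yV; apply/existsP/existsP => [[G]|[G']].
  case/andP => GF /existsP [i /andP [/eqP ex /eqP ey]].
  exists (rEp G); rewrite imset_f //=; apply/existsP; exists i.
  by rewrite !vx_map ?ex ?ey ?eqxx // ltnW.
case/andP => /imsetP [G GF ->] /existsP [i].
rewrite !vx_map ?(ltnW (ltn_ord i)) // => /andP [/eqP ex /eqP ey].
have v1 : vx G i \in VS F by apply: vx_VS => //; apply: ltnW.
have v2 : vx G i.+1 \in VS F by apply: vx_VS.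
exists G; rewrite GF /=; apply/existsP; exists i.
by rewrite (rE_injVS pG0 v1 xV ex) (rE_injVS pG0 v2 yV ey) !eqxx.
Qed.

Lemma ES_transp_on x y : ES F x y -> transp_on E (x^-1 * y)%g.
Proof. by case/existsP => G /andP [GF /existsP [i /andP [/eqP <- /eqP <-]]]; apply: edge_transp_on. Qed.

Lemma graph_iso_S : graph_iso (VS F) (ES F) (VS F') (ES F') (rE E).
Proof. by split; [apply: rE_injVS | apply: VS_rE | apply: ES_rE]. Qed.

Lemma VTS_VS p : p \in VTS F -> p.1 \in VS F.
Proof. by rewrite inE => /existsP [G /andP [GF /eqP <-]]; apply: tnth_VS. Qed.

Lemma VTS_rE : [set rEv p | p in VTS F] = VTS F'.
Proof.
apply/setP => -[x' j]; apply/imsetP/idP => [[[x k]]|].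
  rewrite inE => /existsP [G /andP [GF /eqP e]] [-> ->]; rewrite inE; apply/existsP.
  by exists (rEp G); rewrite imset_f //= tnth_map e.
rewrite inE => /existsP [G' /andP [/imsetP [G GF ->] /eqP /= e]].
exists (tnth G j, j); last by rewrite /= -e tnth_map.
by rewrite inE; apply/existsP; exists G; rewrite GF eqxx.
Qed.

Lemma ETS_rE : {in VTS F &, forall p q, ETS F p q = ETS F' (rEv p) (rEv q)}.
Proof.
move=> [x j] [y k] /VTS_VS xV /VTS_VS yV; rewrite /ETS /=; congr andb.
apply/existsP/existsP => [[G]|[G']].
  case/andP => GF /andP [/eqP ex /eqP ey].
  by exists (rEp G); rewrite imset_f //= !tnth_map ex ey !eqxx.
case/andP => /imsetP [G GF ->]; rewrite !tnth_map => /andP [/eqP ex /eqP ey].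
have v1 : tnth G j \in VS F by apply: tnth_VS.
have v2 : tnth G k \in VS F by apply: tnth_VS.
by exists G; rewrite GF (rE_injVS pG0 v1 xV ex) (rE_injVS pG0 v2 yV ey) !eqxx.
Qed.

Lemma ETS_transp_on p q : ETS F p q -> transp_on E (p.1^-1 * q.1)%g.
Proof.
case/andP => /eqP eq /existsP [G /andP [GF /andP [/eqP <- /eqP <-]]].
have jh : (p.2 : nat) < h by rewrite -ltnS -eq ltn_ord.
by rewrite -!vxE eq; apply: edge_transp_on.
Qed.

Lemma graph_iso_TS : graph_iso (VTS F) (ETS F) (VTS F') (ETS F') rEv.
Proof.
split; [|exact: VTS_rE|exact: ETS_rE].
by move=> [x j] [y k] /VTS_VS xV /VTS_VS yV [/(rE_injVS pG0 xV yV) /= -> ->].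
Qed.

Lemma incr_path_rEp (le : rel 'S_n) G : G \in F ->
  incr_path le G = incr_path (rE_order E le) (rEp G).
Proof.
move=> GF; rewrite /incr_path.
have -> : [seq lab (rEp G) i | i <- iota 1 h] = map (rlab E) [seq lab G i | i <- iota 1 h].
  rewrite -map_comp; apply/eq_in_map => i; rewrite mem_iota add1n => hi.
  by rewrite /= lab_rEp.
rewrite sorted_rlab //; apply/allP => t /mapP [i]; rewrite mem_iota add1n => hi ->.
exact: lab_transp_on.
Qed.

Lemma LS_transp_on t : t \in LS F -> transp_on E t.
Proof.
rewrite inE => /existsP [G /andP [GF /existsP [i /eqP <-]]].
by apply: (lab_transp_on pG0 GF); rewrite ltn0Sn ltn_ord.
Qed.

Lemma LS_rE : rlab E @: LS F = LS F'.
Proof.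
apply/setP => t'; apply/imsetP/idP => [[t]|].
  rewrite inE => /existsP [G /andP [GF /existsP [i /eqP <-]]] ->; rewrite inE.
  apply/existsP; exists (rEp G); rewrite imset_f //=; apply/existsP; exists i.
  by rewrite lab_rEp // ltn0Sn ltn_ord.
rewrite inE => /existsP [G' /andP [/imsetP [G GF ->] /existsP [i /eqP <-]]].
exists (lab G i.+1); last by rewrite lab_rEp // ltn0Sn ltn_ord.
by rewrite inE; apply/existsP; exists G; rewrite GF /=; apply/existsP; exists i.
Qed.

Lemma flip_iso_rE : flip_iso F F' (rE E) (rlab E).
Proof.
split.
- by split; [apply: rE_injVS | apply: VS_rE].
- by split; [| apply: rEp_inj].
- exact: rEp_flip.
- split; last by move=> G i GF hi; rewrite lab_rEp.
  by split; [move=> t u /LS_transp_on tE /LS_transp_on uE; apply: rlab_inj | apply: LS_rE].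
- by move=> t u /LS_transp_on tE /LS_transp_on uE; apply: lexlt_rlab.
Qed.

End FlipClassGraphs.


Theorem lemma6p9 (n h : nat) (F : {set h.+1.-tuple 'S_n}) :
  is_flipclass F ->
  let E := EF F in
  let rEp := fun G : h.+1.-tuple 'S_n => map_tuple (rE E) G in
  let F' := [set rEp G | G in F] in
  [/\ (* (1) *)
      [/\ is_flipclass F',
          {in F &, injective rEp},
          (forall G i, G \in F -> rEp (flip i G) = flip i (rEp G)) &
          (forall G i a b, G \in F -> 1 <= i <= h -> lab G i = tperm a b ->
             is_rE_transp E a b (lab (rEp G) i))],
      (* (2) *)
      [/\ graph_iso (VS F) (ES F) (VS F') (ES F') (rE E),
          (forall x y a b, ES F x y -> (x^-1 * y)%g = tperm a b ->
             is_rE_transp E a b ((rE E x)^-1 * rE E y)%g),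
          graph_iso (VTS F) (ETS F) (VTS F') (ETS F')
                    (fun p => (rE E p.1, p.2)) &
          (forall p q a b, ETS F p q -> (p.1^-1 * q.1)%g = tperm a b ->
             is_rE_transp E a b ((rE E p.1)^-1 * rE E q.1)%g)],
      (* (3) *)
      (forall le : rel 'S_n, refl_order le ->
         [/\ (forall G, G \in F -> incr_path le G = incr_path (rE_order E le) (rEp G)),
             (forall x0 s, path (ES F) x0 s ->
                sorted le (labs x0 s) =
                sorted (rE_order E le) (labs (rE E x0) (map (rE E) s))) &
             (forall p0 s, path (ETS F) p0 s ->
                sorted le (labs p0.1 (map fst s)) =
                sorted (rE_order E le)
                  (labs (rE E p0.1) (map (fun p => rE E p.1) s)))]) &
      (* (4) *)
      (exists g : 'S_n -> 'S_#|E|,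
         (forall a b, a \in E -> b \in E -> a != b ->
            is_rE_transp E a b (g (tperm a b))) /\
         flip_iso F F' (rE E) g)].
Proof.
case=> G0 [pG0 ->] E rEp F'.
split.
- split; [exact: is_flipclass_rEp | exact: rEp_inj | exact: rEp_flip |].
  move=> G i a b GF hi e; rewrite lab_rEp //.
  by apply: is_rE_transp_rlab e; apply: lab_transp_on.
- split; [exact: graph_iso_S | | exact: graph_iso_TS |].
  + by move=> x y a b /(ES_transp_on pG0); apply: is_rE_transp_label.
  + by move=> p q a b /(ETS_transp_on pG0); apply: is_rE_transp_label.
- (* labels correspond for any relation [le] *)
  move=> le _; split; first exact: incr_path_rEp.
  + by move=> x0 s /(sub_path (ES_transp_on pG0)) /sorted_labs_rE ->.
  + move=> p0 s ps; rewrite (map_comp (rE E) fst) sorted_labs_rE //.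
    by rewrite path_map; apply: sub_path ps => p q /(ETS_transp_on pG0).
- exists (rlab E); split; last exact: flip_iso_rE.
  by move=> a b aE bE ab; apply: is_rE_transp_rlab (erefl _); apply/transp_onP; exists a, b.
Qed.
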